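(* For all integers $0\le k\le n$, $$\binom{n}{k}_F\equiv \begin{cases} 0 & \text{if } n\equiv 0 \pmod 3 \text{ and } k\equiv 1\pmod 3,\\[4pt] \dbinom{\lceil 2n/3\rceil}{\lceil 2k/3\rceil} & \text{if } n\equiv 1 \pmod 3 \text{ and } k\equiv 0\pmod 3,\\[8pt] \dbinom{\lfloor 2n/3\rfloor}{\lfloor 2k/3\rfloor} & \text{otherwise}, \end{cases} \pmod 2,$$ where $\binom{a}{b}$ denotes the ordinary binomial coefficient (equal to $0$ if $b<0$ or $b>a$), and $\lceil\cdot\rceil,\lfloor\cdot\rfloor$ are the ceiling and floor functions.
   Context: The Fibonacci numbers are defined by $F_0=0$, $F_1=1$, $F_n=F_{n-1}+F_{n-2}$ for $n\ge 2$. For $n\ge 0$ let $n!_F=F_1F_2\cdots F_n$ (with $0!_F=1$), and for $0\le k\le n$ define the Fibonomial coefficient $\binom{n}{k}_F=\dfrac{n!_F}{k!_F\,(n-k)!_F}$; by convention $\binom{n}{k}_F=0$ if $k<0$ or $k>n$. *)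

From mathcomp Require Import all_boot.
Set Implicit Arguments. Unset Strict Implicit. Unset Printing Implicit Defensive.

Fixpoint fib (n : nat) : nat :=
  match n with
  | 0 => 0
  | 1 => 1
  | (m.+1 as p).+1 => fib p + fib m
  end.

Definition fibfact (n : nat) : nat := \prod_(1 <= i < n.+1) fib i.

(* Fibonomial coefficient: n!_F / (k!_F (n-k)!_F) for k <= n, 0 otherwise.
   The division is exact (classical fact), so nat division is faithful. *)
Definition fibonomial (n k : nat) : nat :=
  if k <= n then fibfact n %/ (fibfact k * fibfact (n - k)) else 0.

From mathcomp Require Import all_boot zify.

(* Proof outline.
   1. Fibonacci facts: the splitting identity
        F_{n+1} = F_{n-k+1} F_{k+1} + F_k F_{n-k}   (k <= n)
      and the parity law  F_m odd <-> 3 does not divide m.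
   2. The splitting identity yields the Fibonomial Pascal rule
        [n+1, k+1]_F = F_{n-k+1} [n, k]_F + F_k [n, k+1]_F,
      so the recursively defined [fpascal] times k!_F (n-k)!_F equals n!_F,
      and hence [fibonomial] coincides with [fpascal].
   3. Reducing the Pascal rule mod 2 with the parity law, the coefficients
      become the booleans [3 does not divide n-k+1] and [3 does not divide k].
      The claimed closed form [parity_closed] satisfies exactly this rule
      (a finite case analysis on n, k mod 3 using Pascal's rule for binomials)
      and the same boundary values, so it agrees with [fpascal] mod 2. *)

Lemma fibSS n : fib n.+2 = fib n.+1 + fib n.
Proof. by []. Qed.

Lemma fib_pos m : 0 < fib m.+1.
Proof.
elim/ltn_ind: m => -[|[|m]] IH //.
by rewrite fibSS addn_gt0 IH.
Qed.

Lemma fib_add a b : fib (a + b).+1 = fib a.+1 * fib b.+1 + fib a * fib b.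
Proof.
elim: a b => [|a IH] b; first by rewrite add0n mul1n mul0n addn0.
by rewrite addSnnS IH !fibSS; lia.
Qed.

Lemma fib_split n k : k <= n ->
  fib n.+1 = fib (n - k).+1 * fib k.+1 + fib k * fib (n - k).
Proof. by move=> le_kn; rewrite -{1}(subnK le_kn) addnC fib_add; lia. Qed.

Lemma fib_odd m : odd (fib m) = (m %% 3 != 0).
Proof.
elim/ltn_ind: m => -[|[|[|m]]] IH //.
have -> : fib m.+3 = fib m + 2 * fib m.+1 by rewrite !fibSS; lia.
by rewrite oddD oddM /= addbF IH //; lia.
Qed.

Lemma fibfactS n : fibfact n.+1 = fibfact n * fib n.+1.
Proof. by rewrite /fibfact big_nat_recr. Qed.

Lemma fibfact_pos n : 0 < fibfact n.
Proof.
elim: n => [|n IH]; first by rewrite /fibfact big_geq.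
by rewrite fibfactS muln_gt0 IH fib_pos.
Qed.

Fixpoint fpascal n k := match n, k with
  | 0, 0 => 1
  | 0, _.+1 => 0
  | _.+1, 0 => 1
  | n'.+1, k'.+1 => fib (n' - k').+1 * fpascal n' k' + fib k' * fpascal n' k'.+1
  end.

Lemma fpascalSS n k :
  fpascal n.+1 k.+1 = fib (n - k).+1 * fpascal n k + fib k * fpascal n k.+1.
Proof. by []. Qed.

Lemma fpascal_small n k : n < k -> fpascal n k = 0.
Proof. by elim: n k => [|n IH] [|k] //= lt_nk; rewrite !IH //; lia. Qed.

Lemma fpascal_fibfact n k : k <= n ->
  fpascal n k * (fibfact k * fibfact (n - k)) = fibfact n.
Proof.
elim: n k => [|n IH] [|k] // le_kn.
- by rewrite /fibfact !big_geq.
- by rewrite subn0 mul1n /fibfact big_geq // mul1n.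
rewrite fpascalSS.
have left_term : fib (n - k).+1 * fpascal n k * (fibfact k.+1 * fibfact (n - k))
                 = fib (n - k).+1 * fib k.+1 * fibfact n.
  by rewrite -(IH k) // fibfactS; lia.
rewrite subSS mulnDl left_term.
have [lt_kn | le_nk] := ltnP k n; last first.
  have -> : k = n by lia.
  by rewrite fpascal_small // subnn muln0 mul0n addn0 mul1n mulnC fibfactS.
have right_term : fib k * fpascal n k.+1 * (fibfact k.+1 * fibfact (n - k))
                  = fib k * fib (n - k) * fibfact n.
  have -> : fibfact (n - k) = fibfact (n - k.+1) * fib (n - k).
    by rewrite -subnSK // fibfactS.
  by rewrite -(IH k.+1) //; lia.
by rewrite right_term -mulnDl -fib_split // fibfactS mulnC; lia.
Qed.

Lemma fibonomialE n k : k <= n -> fibonomial n k = fpascal n k.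
Proof.
move=> le_kn; rewrite /fibonomial le_kn -(fpascal_fibfact n k le_kn) mulnK //.
by rewrite muln_gt0 !fibfact_pos.
Qed.

Definition parity_closed n k :=
  if (n %% 3 == 0) && (k %% 3 == 1) then 0
  else if (n %% 3 == 1) && (k %% 3 == 0) then 'C((2 * n + 2) %/ 3, (2 * k + 2) %/ 3)
  else 'C((2 * n) %/ 3, (2 * k) %/ 3).

(* parity_closed (3a + r) (3b + s), tabulated by the residues r, s < 3. *)
Definition parity_table r s a b :=
  match r, s with
  | 0, 0 => 'C(2 * a, 2 * b)
  | 0, 1 => 0
  | 0, _ => 'C(2 * a, (2 * b).+1)
  | 1, 0 => 'C((2 * a).+1, 2 * b)
  | 1, 1 => 'C(2 * a, 2 * b)
  | 1, _ => 'C(2 * a, (2 * b).+1)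
  | _, 0 => 'C((2 * a).+1, 2 * b)
  | _, 1 => 'C((2 * a).+1, 2 * b)
  | _, _ => 'C((2 * a).+1, (2 * b).+1)
  end.

(* The closed form depends on n, k only through their digits in base 3 as
   tabulated, since floor/ceiling of 2(3a+r)/3 is 2a plus a constant. *)
Lemma parity_closedE n k :
  parity_closed n k = parity_table (n %% 3) (k %% 3) (n %/ 3) (k %/ 3).
Proof.
rewrite {1}(divn_eq n 3) {1}(divn_eq k 3) /parity_closed.
have : n %% 3 < 3 by rewrite ltn_mod. have : k %% 3 < 3 by rewrite ltn_mod.
move: (n %/ 3) (k %/ 3) (n %% 3) (k %% 3) => a b r s lt_s3 lt_r3.
have mod3 x y : (x * 3 + y) %% 3 = y %% 3 by lia.
have div3 x y : (2 * (x * 3 + y)) %/ 3 = 2 * x + (2 * y) %/ 3 by lia.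
have div3' x y : (2 * (x * 3 + y) + 2) %/ 3 = 2 * x + (2 * y + 2) %/ 3 by lia.
rewrite !mod3 !div3 !div3'.
by case: r lt_r3 => [|[|[|r]]] //= _; case: s lt_s3 => [|[|[|s]]] //= _;
  rewrite ?addn0 ?addn1.
Qed.

Ltac reduce_mod3 a b := repeat match goal with
  | |- context[?e %% 3] => first [ have -> : e %% 3 = 0 by lia
                                 | have -> : e %% 3 = 1 by lia
                                 | have -> : e %% 3 = 2 by lia ]
  | |- context[?e %/ 3] => first [ have -> : e %/ 3 = a by lia
                                 | have -> : e %/ 3 = a.+1 by lia
                                 | have -> : e %/ 3 = b by lia
                                 | have -> : e %/ 3 = b.+1 by lia ]
  end.

Lemma div3_cases n : exists a r, n = 3 * a + r /\ r < 3.
Proof. by exists (n %/ 3), (n %% 3); lia. Qed.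

Lemma parity_closed_small n k : n < k -> parity_closed n k = 0.
Proof.
have [a [r [-> lt_r3]]] := div3_cases n; have [b [s [-> lt_s3]]] := div3_cases k.
rewrite !parity_closedE => lt_nk.
case: r lt_r3 lt_nk => [|[|[|r]]] // _ lt_nk;
  case: s lt_s3 lt_nk => [|[|[|s]]] // _ lt_nk;
  reduce_mod3 a b; rewrite /parity_table //= bin_small //; lia.
Qed.

(* The closed form obeys the Fibonomial Pascal rule with the coefficients
   F_{n-k+1}, F_k replaced by their parities. *)
Lemma parity_closed_rec n k : k <= n ->
  parity_closed n.+1 k.+1 =
    ((n - k).+1 %% 3 != 0) * parity_closed n k
    + (k %% 3 != 0) * parity_closed n k.+1.
Proof.
have [a [r [-> lt_r3]]] := div3_cases n; have [b [s [-> lt_s3]]] := div3_cases k.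
rewrite !parity_closedE => le_kn.
case: r lt_r3 le_kn => [|[|[|r]]] // _ le_kn;
  case: s lt_s3 le_kn => [|[|[|s]]] // _ le_kn;
  reduce_mod3 a b; rewrite /parity_table /=.
all: by rewrite ?mul1n ?mul0n ?addn0 ?add0n ?mulnS ?add2n ?binS // addnC.
Qed.

Lemma modn2_addmul a b c d :
  (a * b + c * d) %% 2 = (odd a * (b %% 2) + odd c * (d %% 2)) %% 2.
Proof. by rewrite -modnDm -modnMm -(modnMm c) modnDm !modn2. Qed.

(* Both sides obey the same recurrence mod 2 with the same boundary values. *)
Lemma fpascal_mod2 n k : fpascal n k = parity_closed n k %[mod 2].
Proof.
elim: n k => [|n IH] [|k] //.
- by rewrite parity_closed_small.
- rewrite /parity_closed muln0 add0n div0n (@divn_small 2) //.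
  by rewrite !bin0 mod0n andbF; case: ifP.
have [lt_nk | le_kn] := ltnP n k.
  by rewrite fpascal_small ?parity_closed_small.
rewrite parity_closed_rec // fpascalSS modn2_addmul [RHS]modn2_addmul !IH.
by rewrite !fib_odd !oddb.
Qed.

Theorem mainTheorem3 (n k : nat) : k <= n ->
  fibonomial n k =
    (if (n %% 3 == 0) && (k %% 3 == 1) then 0
     else if (n %% 3 == 1) && (k %% 3 == 0) then 'C((2 * n + 2) %/ 3, (2 * k + 2) %/ 3)
     else 'C((2 * n) %/ 3, (2 * k) %/ 3)) %[mod 2].
Proof. by move=> le_kn; rewrite fibonomialE // fpascal_mod2. Qed.
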